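(* Let $Q_1,Q_2\in\mathscr{Q}$ and $\delta>0$ with $\delta\le\min\{Q_1(1),Q_2(1)\}\le\max\{Q_1(1),Q_2(1)\}\le\sqrt{1-\delta^2}$. Let $W_1,W_2$ be the vorticity profiles associated with $Q_1,Q_2$. Then there is $C>0$ depending only on $\delta$ such that $\sup_{r>0}(1+r^4)|W_1(r)-W_2(r)|\le C\|Q_1-Q_2\|_{L^\infty(\mathbb{R}_+)}$ and $\sup_{r>0}(1+r^5)|W_1'(r)-W_2'(r)|\le C\,\mathcal{N}(Q_1-Q_2)+C\bigl(1+\mathcal{N}(Q_2)\bigr)\|Q_1-Q_2\|_{L^\infty(\mathbb{R}_+)}$.
   Context: Class $\mathscr{Q}$: all $\mathcal{C}^1$ functions $Q:(0,\infty)\to(0,1]$ with $Q'>0$ on $(0,\infty)$, $Q(r)\to0$ and $rQ'(r)\to0$ as $r\to0$, and $rQ'(r)\to0$ as $r\to\infty$. For a $\mathcal{C}^1$ function $F$ on $(0,\infty)$, $\mathcal{N}(F)=\sup_{r>0}r|F'(r)|$. The vorticity profile associated with $Q\in\mathscr{Q}$: $J=Q^{-2}-1$, $\Omega(r)=\exp\bigl(-\int_0^r\frac{4}{s+\sqrt{s^2+4J(s)}}ds\bigr)$, $W(r)=\Omega(r)\bigl(2-\frac{4r}{r+\sqrt{r^2+4J(r)}}\bigr)$. *)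

From Stdlib Require Import Reals Lra ClassicalEpsilon.
Open Scope R_scope.

Definition deriv (f : R -> R) (x : R) : R :=
  epsilon (inhabits 0) (fun l => derivable_pt_lim f x l).

Definition integral (f : R -> R) (a b : R) : R :=
  epsilon (inhabits 0)
    (fun I => exists pr : Riemann_integrable f a b, RiemannInt pr = I).

Definition classQ (Q : R -> R) : Prop :=
  exists Q' : R -> R,
    (forall r, 0 < r -> derivable_pt_lim Q r (Q' r)) /\
    (forall r, 0 < r -> continuity_pt Q' r) /\
    (forall r, 0 < r -> 0 < Q r <= 1) /\
    (forall r, 0 < r -> 0 < Q' r) /\
    (forall eps, 0 < eps -> exists d, 0 < d /\
        forall r, 0 < r < d -> Rabs (Q r) < eps /\ Rabs (r * Q' r) < eps) /\
    (forall eps, 0 < eps -> exists M, 0 < M /\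
        forall r, M < r -> Rabs (r * Q' r) < eps).

Definition Jf (Q : R -> R) (r : R) : R := / (Q r ^ 2) - 1.

(* integrand of Omega on (0,r]; its value at s <= 0 is irrelevant (set to 0,
   which is also its limit at 0+) *)
Definition omega_integrand (Q : R -> R) (s : R) : R :=
  if Rle_dec s 0 then 0 else 4 / (s + sqrt (s ^ 2 + 4 * Jf Q s)).

Definition Omega (Q : R -> R) (r : R) : R :=
  exp (- integral (omega_integrand Q) 0 r).

Definition Wf (Q : R -> R) (r : R) : R :=
  Omega Q r * (2 - 4 * r / (r + sqrt (r ^ 2 + 4 * Jf Q r))).

Definition sup_pos (g : R -> R) (s : R) : Prop :=
  is_lub (fun y => exists r, 0 < r /\ y = g r) s.

From Stdlib Require Import Reals Lra Psatz ClassicalEpsilon.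
From Coquelicot Require Import Coquelicot.
Open Scope R_scope.

(* Write q = Q r.  As Q increases, the hypotheses on Q(1) give 1 - q^2 >= delta^2 for
   r <= 1 and q >= delta for r >= 1, hence T = sqrt (r^2 q^2 + 4 - 4 q^2) >= delta max(1,r).
   On this region the integrand g of Omega and the functions h, k in W' are
   O(max(1,r)^-3), and 2 - r g = O(1/(1+r^2)), with q-Lipschitz constants of the same
   decay.  As g >= 2/(r + 1/delta) for r >= 1, Omega(r) (r + 1/delta)^2 is nonincreasing,
   so Omega = O(1/(1+r^2)); integrating |g1 - g2| <= C ||Q1 - Q2|| / (1+s^2) gives
   |Omega1 - Omega2| = O(||Q1 - Q2|| / (1+r^2)).  Expanding the differences of the
   products W = Omega (2 - r g) and W' = - Omega (h + r Q' k) and collecting the weights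
   gives both estimates. *)

(* With q = Q r one has sqrt (r^2 + 4 J r) = Tq r q / q, so [gq r (Q r)] is the
   integrand of Omega, W = Omega (2 - r gq) and W' = - Omega (hq + r Q' kq). *)
Definition Tq r q := sqrt (r^2*q^2 + 4 - 4*q^2).
Definition gq r q := 4*q/(Tq r q + r*q).
Definition kq r q := 16/(Tq r q * (Tq r q + r*q)^2).
Definition hq r q := 32*q*(1-q^2)/(Tq r q + r*q)^3
   + 16*q*(1-q^2)/(Tq r q*(Tq r q + r*q)^2).

Lemma Tq_sq r q : 0 <= q <= 1 -> Tq r q ^ 2 = r^2*q^2 + 4 - 4*q^2.
Proof. intros. unfold Tq. rewrite pow2_sqrt; nra. Qed.

Lemma Tq_ge_rq r q : 0 <= r -> 0 <= q <= 1 -> r*q <= Tq r q.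
Proof.
  intros Hr Hq. pose proof (Tq_sq r q Hq) as E. pose proof (sqrt_pos (r^2*q^2 + 4 - 4*q^2)).
  fold (Tq r q) in *. nra.
Qed.

Lemma Tq_le r q : 0 <= r -> 0 <= q <= 1 -> Tq r q <= 2 + r*q.
Proof.
  intros Hr Hq. pose proof (Tq_sq r q Hq) as E. pose proof (sqrt_pos (r^2*q^2 + 4 - 4*q^2)).
  fold (Tq r q) in *. assert (0 <= r*q) by nra. nra.
Qed.

Lemma Tq_sq_ge r q : 0 <= q <= 1 -> 4*(1-q^2) <= Tq r q ^ 2.
Proof. intros. rewrite Tq_sq; nra. Qed.

Lemma Tq_pos r q : 0 < r -> 0 < q <= 1 -> 0 < Tq r q.
Proof. intros. pose proof (Tq_ge_rq r q). nra. Qed.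

Lemma omega_integrand_eq Q r : 0 < r -> 0 < Q r <= 1 ->
  omega_integrand Q r = gq r (Q r).
Proof.
  intros Hr Hq. unfold omega_integrand. destruct (Rle_dec r 0); [lra|].
  unfold Jf, gq. set (q := Q r) in *.
  pose proof (Tq_pos r q Hr Hq) as HT.
  assert (Hs : sqrt (r ^ 2 + 4 * (/ q ^ 2 - 1)) = Tq r q / q).
  { apply sqrt_lem_1.
    - assert (0 < q^2 <= 1) by nra.
      assert (1 <= / q^2) by (rewrite <- Rinv_1; apply Rinv_le_contravar; lra). nra.
    - apply Rlt_le, Rdiv_lt_0_compat; lra.
    - replace (Tq r q / q * (Tq r q / q)) with (Tq r q ^2 / q^2) by (field; lra).
      rewrite Tq_sq by lra. field. lra. }
  rewrite Hs. field. assert (0 < r*q) by nra. split; lra.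
Qed.

Lemma deriv_eq f x l : derivable_pt_lim f x l -> deriv f x = l.
Proof.
  intros H. unfold deriv.
  pose proof (epsilon_spec (inhabits 0) _ (ex_intro _ l H)) as H1.
  eapply uniqueness_limite; eauto.
Qed.

Lemma classQ_bounds Q : classQ Q -> forall r, 0 < r -> 0 < Q r <= 1.
Proof. intros (Q' & _ & _ & Hb & _). exact Hb. Qed.

Lemma classQ_le Q : classQ Q -> forall a b, 0 < a -> a <= b -> Q a <= Q b.
Proof.
  intros (Q' & HD & _ & _ & HQ'pos & _) a b Ha Hab.
  destruct (Req_dec a b) as [<-|Hne]; [lra|].
  destruct (MVT_cor2 Q Q' a b) as (c & Hc & Hc2); [lra|intros; apply HD; lra|].
  assert (0 < Q' c) by (apply HQ'pos; lra). nra.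
Qed.

Lemma gq_pos r q : 0 < r -> 0 < q <= 1 -> 0 < gq r q.
Proof. intros. pose proof (Tq_pos r q H H0). unfold gq. apply Rdiv_lt_0_compat; nra. Qed.

Lemma gq_le_4q r q : 0 < r -> 0 < q <= 1/2 -> gq r q <= 4*q.
Proof.
  intros Hr Hq. pose proof (Tq_sq_ge r q ltac:(split; lra)).
  pose proof (Tq_pos r q Hr ltac:(split; lra)).
  assert (q^2 <= 1/4) by nra. assert (1 <= Tq r q) by nra.
  assert (1 <= Tq r q + r*q) by nra.
  unfold gq. apply Rmult_le_reg_r with (Tq r q + r*q); [lra|].
  unfold Rdiv. rewrite Rmult_assoc, Rinv_l by lra. nra.
Qed.

Lemma omega_integrand_nonneg Q : classQ Q -> forall s, 0 <= omega_integrand Q s.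
Proof.
  intros HQ s. destruct (Rle_dec s 0) as [Hs|Hs].
  - unfold omega_integrand. destruct (Rle_dec s 0); lra.
  - pose proof (classQ_bounds Q HQ s ltac:(lra)).
    rewrite omega_integrand_eq by (auto; lra). apply Rlt_le, gq_pos; auto; lra.
Qed.

Lemma omega_integrand_continuous_pos Q : classQ Q ->
  forall x, 0 < x -> continuous (omega_integrand Q) x.
Proof.
  intros HQ x Hx. pose proof HQ as (Q' & HD & _ & Hb & _).
  apply continuous_ext_loc with (fun u => 4 / (u + sqrt (u ^ 2 + 4 * (/ (Q u ^ 2) - 1)))).
  { apply filter_imp with (fun u => 0 < u); [|now apply (open_gt 0)].
    intros u Hu. unfold omega_integrand, Jf. destruct (Rle_dec u 0); auto; lra. }
  apply (@ex_derive_continuous R_AbsRing R_NormedModule).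
  destruct (Hb x Hx) as [Hq1 Hq2].
  assert (1 <= / Q x ^ 2) by (rewrite <- Rinv_1; apply Rinv_le_contravar; nra).
  auto_derive. replace (Q x * (Q x * 1)) with (Q x ^ 2) by ring.
  pose proof (sqrt_pos (x * (x * 1) + 4 * (/ Q x ^ 2 + - (1)))).
  repeat split; try lra; try nra. exists (Q' x). apply is_derive_Reals; auto.
Qed.

Lemma omega_integrand_continuous_0 Q : classQ Q -> continuous (omega_integrand Q) 0.
Proof.
  intros HQ. pose proof HQ as (Q' & _ & _ & Hb & _ & H0 & _).
  apply continuity_pt_filterlim. intros eps Heps.
  destruct (H0 (Rmin (eps/8) (1/2))) as (d & Hd & Hd2); [apply Rmin_pos; lra|].
  exists d. split; auto. intros y [_ Hy]. simpl in *. unfold R_dist in *.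
  unfold omega_integrand at 2. destruct (Rle_dec 0 0); [|lra].
  rewrite Rminus_0_r in *.
  destruct (Rle_dec y 0) as [Hy0|Hy0].
  - unfold omega_integrand. destruct (Rle_dec y 0); [|lra]. rewrite Rabs_R0. lra.
  - rewrite Rabs_pos_eq in Hy by lra.
    destruct (Hd2 y ltac:(lra)) as [HQy _]. pose proof (Hb y ltac:(lra)).
    rewrite Rabs_pos_eq in HQy by lra.
    pose proof (Rmin_l (eps/8) (1/2)). pose proof (Rmin_r (eps/8) (1/2)).
    rewrite omega_integrand_eq by (auto; lra).
    pose proof (gq_le_4q y (Q y) ltac:(lra) ltac:(lra)).
    pose proof (gq_pos y (Q y) ltac:(lra) ltac:(lra)).
    rewrite Rabs_pos_eq; lra.
Qed.

Lemma omega_integrand_continuous Q : classQ Q -> forall x, continuous (omega_integrand Q) x.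
Proof.
  intros HQ x. destruct (Rtotal_order x 0) as [Hx|[->|Hx]].
  - apply continuous_ext_loc with (fun _ => 0); [|apply continuous_const].
    apply filter_imp with (fun u => u < 0); [|now apply (open_lt 0)].
    intros u Hu. unfold omega_integrand. destruct (Rle_dec u 0); auto; lra.
  - now apply omega_integrand_continuous_0.
  - now apply omega_integrand_continuous_pos.
Qed.

Definition omega_int Q x := RInt (omega_integrand Q) 0 x.

Lemma omega_int_derive Q : classQ Q -> forall x, is_derive (omega_int Q) x (omega_integrand Q x).
Proof.
  intros HQ x. apply (is_derive_RInt (omega_integrand Q) (omega_int Q) 0 x).
  - apply filter_forall. intros b. apply (@RInt_correct R_CompleteNormedModule),
      (@ex_RInt_continuous R_CompleteNormedModule).
    intros; apply omega_integrand_continuous; auto.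
  - apply omega_integrand_continuous; auto.
Qed.

Lemma omega_int_nonneg Q : classQ Q -> forall r, 0 <= r -> 0 <= omega_int Q r.
Proof.
  intros HQ r Hr. apply RInt_ge_0; auto.
  - apply (@ex_RInt_continuous R_CompleteNormedModule).
    intros; apply omega_integrand_continuous; auto.
  - intros; apply omega_integrand_nonneg; auto.
Qed.

Lemma omega_int_0 Q : omega_int Q 0 = 0.
Proof. unfold omega_int. rewrite RInt_point. reflexivity. Qed.

Lemma Omega_eq Q : classQ Q -> forall r, 0 <= r -> Omega Q r = exp (- omega_int Q r).
Proof.
  intros HQ r Hr. unfold Omega, integral. do 2 f_equal.
  assert (E : exists I, exists pr : Riemann_integrable (omega_integrand Q) 0 r,
                RiemannInt pr = I).
  { eexists. exists (continuity_implies_RiemannInt Hr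
      (fun x _ => proj2 (continuity_pt_filterlim _ _) (omega_integrand_continuous Q HQ x))).
    reflexivity. }
  destruct (epsilon_spec (inhabits 0) _ E) as [pr <-].
  symmetry; apply RInt_Reals.
Qed.

Lemma Wf_eq Q : classQ Q -> forall r, 0 < r ->
  Wf Q r = exp (- omega_int Q r) * (2 - r * gq r (Q r)).
Proof.
  intros HQ r Hr. unfold Wf. rewrite Omega_eq by (auto; lra).
  rewrite <- omega_integrand_eq by (auto; apply classQ_bounds; auto).
  unfold omega_integrand. destruct (Rle_dec r 0); [lra|].
  pose proof (sqrt_pos (r ^ 2 + 4 * Jf Q r)). field. lra.
Qed.

Lemma Wf_derive Q Q' : classQ Q -> (forall r, 0 < r -> derivable_pt_lim Q r (Q' r)) ->
  forall r, 0 < r -> derivable_pt_lim (Wf Q) r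
    (- exp (- omega_int Q r) * (hq r (Q r) + r * Q' r * kq r (Q r))).
Proof.
  intros HQ HD r Hr. apply is_derive_Reals.
  apply is_derive_ext_loc with (fun x => exp (- omega_int Q x) * (2 - x * gq x (Q x))).
  { apply filter_imp with (fun u => 0 < u); [|now apply (open_gt 0)].
    intros u Hu. symmetry. apply Wf_eq; auto. }
  pose proof (classQ_bounds Q HQ r Hr) as Hq.
  pose proof (Tq_pos r (Q r) Hr Hq) as HT. pose proof (Tq_sq r (Q r) ltac:(split; lra)) as E.
  assert (HGd := omega_int_derive Q HQ r).
  assert (HQd : is_derive Q r (Q' r)) by (apply is_derive_Reals; auto).
  assert (0 < r * Q r) by nra.
  unfold gq, hq, kq, Tq in *. auto_derive;
    replace (r * (r * 1) * (Q r * (Q r * 1)) + 4 + - (4 * (Q r * (Q r * 1))))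
      with (r ^ 2 * Q r ^ 2 + 4 - 4 * Q r ^ 2) by ring.
  - repeat split; try (eexists; eassumption); nra.
  - replace (Derive (fun x => omega_int Q x) r) with (omega_integrand Q r)
      by (symmetry; now apply is_derive_unique).
    replace (Derive (fun x => Q x) r) with (Q' r) by (symmetry; now apply is_derive_unique).
    rewrite omega_integrand_eq by auto.
    unfold gq, Tq.
    set (T := sqrt (r ^ 2 * Q r ^ 2 + 4 - 4 * Q r ^ 2)) in *.
    assert (E3: T^3 = T*(r ^ 2 * Q r ^ 2 + 4 - 4 * Q r ^ 2)) by (rewrite <- E; ring).
    field_simplify_eq; [|split; lra]. rewrite E, E3. ring.
Qed.

Definition rho r := Rmax 1 r.

Lemma rho_cases r : (r <= 1 /\ rho r = 1) \/ (1 <= r /\ rho r = r).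
Proof.
  unfold rho. destruct (Rle_dec r 1).
  - left. split; auto. apply Rmax_left; auto.
  - right. split; [lra|]. apply Rmax_right. lra.
Qed.

Lemma rho_ge1 r : 1 <= rho r.
Proof. apply Rmax_l. Qed.

Lemma rho_ge r : r <= rho r.
Proof. apply Rmax_r. Qed.

Lemma rho_pos r : 0 < rho r.
Proof. pose proof (rho_ge1 r). lra. Qed.

Definition admissible d r q :=
  0 < q <= 1 /\ (r <= 1 -> d^2 <= 1 - q^2) /\ (1 <= r -> d <= q).

Lemma classQ_admissible Q d : classQ Q -> 0 < d -> d <= Q 1 -> Q 1 <= sqrt (1 - d^2) ->
  forall r, 0 < r -> admissible d r (Q r).
Proof.
  intros HQ Hd H1 H2 r Hr. pose proof (classQ_bounds Q HQ r Hr) as Hq.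
  pose proof (classQ_bounds Q HQ 1 ltac:(lra)) as Hq1.
  assert (Hnn : 0 <= 1 - d^2).
  { destruct (Rle_dec 0 (1 - d^2)); auto. rewrite sqrt_neg_0 in H2 by lra. lra. }
  split; [auto|split].
  - intros Hr1. assert (Q r <= sqrt (1 - d^2)) by (pose proof (classQ_le Q HQ r 1 Hr Hr1); lra).
    assert (HH : Q r ^ 2 <= sqrt (1 - d^2) ^ 2) by (apply pow_incr; lra).
    rewrite pow2_sqrt in HH by lra. lra.
  - intros Hr1. pose proof (classQ_le Q HQ 1 r ltac:(lra) Hr1). lra.
Qed.

Lemma Tq_ge_rho d r q : 0 < d <= 1 -> 0 < r -> admissible d r q -> d * rho r <= Tq r q.
Proof.
  intros Hd Hr (Hq & H1 & H2). pose proof (Tq_pos r q Hr Hq).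
  destruct (rho_cases r) as [[Hr1 ->]|[Hr1 ->]].
  - pose proof (Tq_sq_ge r q ltac:(split; lra)). specialize (H1 Hr1). nra.
  - pose proof (Tq_ge_rq r q ltac:(lra) ltac:(split; lra)). specialize (H2 Hr1). nra.
Qed.

Lemma Tq_le_rho r q : 0 < r -> 0 < q <= 1 -> Tq r q <= 3 * rho r.
Proof.
  intros Hr Hq. pose proof (Tq_le r q ltac:(lra) ltac:(split; lra)).
  pose proof (rho_ge1 r). pose proof (rho_ge r). nra.
Qed.

Lemma Tq_diff_mul r q1 q2 : 0 < r -> 0 < q1 <= 1 -> 0 < q2 <= 1 ->
  Rabs (Tq r q1 - Tq r q2) * (Tq r q1 + Tq r q2)
  = Rabs (q1 - q2) * ((q1 + q2) * Rabs (r^2 - 4)).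
Proof.
  intros Hr H1 H2. pose proof (Tq_pos r q1 Hr H1). pose proof (Tq_pos r q2 Hr H2).
  rewrite <- (Rabs_pos_eq (Tq r q1 + Tq r q2)), <- (Rabs_pos_eq (q1 + q2)) by lra.
  rewrite <- !Rabs_mult. f_equal.
  replace ((Tq r q1 - Tq r q2) * (Tq r q1 + Tq r q2)) with (Tq r q1 ^ 2 - Tq r q2 ^ 2) by ring.
  rewrite !Tq_sq by lra. ring.
Qed.

Lemma Tq_lipschitz d r q1 q2 : 0 < d <= 1 -> 0 < r ->
  admissible d r q1 -> admissible d r q2 ->
  Rabs (Tq r q1 - Tq r q2) <= 5 / d * rho r * Rabs (q1 - q2).
Proof.
  intros Hd Hr R1 R2.
  pose proof (Tq_ge_rho d r q1 Hd Hr R1). pose proof (Tq_ge_rho d r q2 Hd Hr R2).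
  destruct R1 as (Hq1 & _ & B1), R2 as (Hq2 & _ & B2).
  pose proof (Tq_diff_mul r q1 q2 Hr Hq1 Hq2) as E.
  pose proof (Rabs_pos (Tq r q1 - Tq r q2)). pose proof (Rabs_pos (q1 - q2)).
  assert (H5 : 5 <= 5 / d) by (unfold Rdiv; rewrite <- (Rmult_1_r 5) at 1;
    apply Rmult_le_compat_l; [lra|rewrite <- Rinv_1; apply Rinv_le_contravar; lra]).
  assert (Hd5 : 5 / d * d = 5) by (field; lra).
  destruct (rho_cases r) as [[Hr1 E1]|[Hr1 E1]]; rewrite E1 in *.
  - assert (Rabs (r^2 - 4) <= 4) by (rewrite Rabs_left1; nra).
    assert (Rabs (Tq r q1 - Tq r q2) * (2 * d) <= 8 * Rabs (q1 - q2)).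
    { apply Rle_trans with (Rabs (Tq r q1 - Tq r q2) * (Tq r q1 + Tq r q2)); [nra|].
      rewrite E, (Rmult_comm 8). pose proof (Rabs_pos (r^2 - 4)).
      apply Rmult_le_compat_l; [lra|]. nra. }
    apply Rmult_le_reg_r with d; nra.
  - specialize (B1 Hr1). specialize (B2 Hr1).
    pose proof (Tq_ge_rq r q1 ltac:(lra) ltac:(split; lra)).
    pose proof (Tq_ge_rq r q2 ltac:(lra) ltac:(split; lra)).
    assert (Rabs (r^2 - 4) <= 5 * r^2) by (apply Rabs_le; nra).
    assert (Rabs (Tq r q1 - Tq r q2) * (r * (q1 + q2)) <= 5 * r * Rabs (q1 - q2) * (r * (q1 + q2))).
    { apply Rle_trans with (Rabs (Tq r q1 - Tq r q2) * (Tq r q1 + Tq r q2)); [nra|].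
      rewrite E. pose proof (Rabs_pos (r^2 - 4)).
      replace (5 * r * Rabs (q1 - q2) * (r * (q1 + q2)))
        with (Rabs (q1 - q2) * ((q1 + q2) * (5 * r^2))) by ring.
      apply Rmult_le_compat_l; [lra|]. apply Rmult_le_compat_l; lra. }
    assert (Rabs (Tq r q1 - Tq r q2) <= 5 * r * Rabs (q1 - q2))
      by (apply Rmult_le_reg_r with (r * (q1 + q2)); nra).
    nra.
Qed.

Lemma gq_diff_eq r q1 q2 : 0 < r -> 0 < q1 <= 1 -> 0 < q2 <= 1 ->
  gq r q1 - gq r q2 = 16 * (q1 - q2) * (q1 + q2) /
    ((q1 * Tq r q2 + q2 * Tq r q1) * (Tq r q1 + r * q1) * (Tq r q2 + r * q2)).
Proof.
  intros Hr H1 H2. pose proof (Tq_pos r q1 Hr H1). pose proof (Tq_pos r q2 Hr H2).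
  pose proof (Tq_sq r q1 ltac:(split; lra)). pose proof (Tq_sq r q2 ltac:(split; lra)).
  unfold gq. set (T1 := Tq r q1) in *. set (T2 := Tq r q2) in *.
  assert (0 < r * q1) by nra. assert (0 < r * q2) by nra.
  assert (0 < q1 * T2 + q2 * T1) by nra.
  apply Rmult_eq_reg_r with ((q1 * T2 + q2 * T1) * (T1 + r * q1) * (T2 + r * q2)).
  - field_simplify; [rewrite H3, H4; ring|lra..].
  - apply Rgt_not_eq. repeat apply Rmult_lt_0_compat; lra.
Qed.

Lemma gq_lipschitz d r q1 q2 : 0 < d <= 1 -> 0 < r ->
  admissible d r q1 -> admissible d r q2 ->
  Rabs (gq r q1 - gq r q2) * rho r ^ 3 <= 16 / d^3 * Rabs (q1 - q2).
Proof.
  intros Hd Hr R1 R2.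
  pose proof (Tq_ge_rho d r q1 Hd Hr R1). pose proof (Tq_ge_rho d r q2 Hd Hr R2).
  destruct R1 as (Hq1 & _), R2 as (Hq2 & _).
  rewrite gq_diff_eq by auto.
  set (T1 := Tq r q1) in *. set (T2 := Tq r q2) in *. set (p := rho r) in *.
  pose proof (rho_ge1 r). fold p in H1.
  assert (0 < d * p) by nra. assert (0 < r * q1) by nra. assert (0 < r * q2) by nra.
  set (D := (q1 * T2 + q2 * T1) * (T1 + r * q1) * (T2 + r * q2)).
  assert (LD : (q1 + q2) * (d * p) ^ 3 <= D).
  { unfold D. replace ((q1 + q2) * (d * p) ^ 3)
      with ((q1 * (d * p) + q2 * (d * p)) * (d * p) * (d * p)) by ring.
    assert (q1 * (d * p) + q2 * (d * p) <= q1 * T2 + q2 * T1) by nra.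
    assert (0 <= q1 * (d * p) + q2 * (d * p)) by nra.
    apply Rmult_le_compat; [nra|lra| |nra]. apply Rmult_le_compat; nra. }
  assert (0 < D)
    by (eapply Rlt_le_trans; [|exact LD]; apply Rmult_lt_0_compat; [lra|apply pow_lt; lra]).
  rewrite Rabs_div, Rabs_pos_eq with (x := D), !Rabs_mult, Rabs_pos_eq with (x := 16),
    Rabs_pos_eq with (x := q1 + q2) by lra.
  pose proof (Rabs_pos (q1 - q2)). assert (0 < d^3) by (apply pow_lt; lra).
  apply Rmult_le_reg_r with (D * d^3); [nra|].
  replace (16 * Rabs (q1 - q2) * (q1 + q2) / D * p ^ 3 * (D * d ^ 3))
    with (16 * Rabs (q1 - q2) * ((q1 + q2) * (d * p) ^ 3)) by (field; lra).
  replace (16 / d ^ 3 * Rabs (q1 - q2) * (D * d ^ 3))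
    with (16 * Rabs (q1 - q2) * D) by (field; lra).
  apply Rmult_le_compat_l; lra.
Qed.

Lemma gq_ge d x q : 0 < d <= 1 -> 1 <= x -> d <= q <= 1 -> 2 <= gq x q * (x + / d).
Proof.
  intros Hd Hx Hq. pose proof (Tq_le x q ltac:(lra) ltac:(split; lra)).
  pose proof (Tq_pos x q ltac:(lra) ltac:(split; lra)).
  assert (Hc : 1 <= q / d) by (apply Rle_div_r; lra).
  unfold gq. rewrite Rmult_comm, Rmult_div_assoc.
  apply Rle_div_r; [nra|]. unfold Rdiv in Hc. nra.
Qed.

Lemma one_sub_rgq_eq r q : 0 < r -> 0 < q <= 1 ->
  2 - r * gq r q = 8 * (1 - q^2) / (Tq r q + r * q)^2.
Proof.
  intros Hr Hq. pose proof (Tq_pos r q Hr Hq). pose proof (Tq_sq r q ltac:(split; lra)).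
  assert (0 < r * q) by nra. unfold gq.
  apply Rmult_eq_reg_r with ((Tq r q + r * q)^2); [|apply Rgt_not_eq, pow_lt; lra].
  field_simplify; [rewrite H0; ring|lra..].
Qed.

Lemma one_sub_rgq_decay d r q : 0 < d <= 1 -> 0 < r -> admissible d r q ->
  0 <= 2 - r * gq r q /\ (2 - r * gq r q) * (1 + r^2) <= 16 / d^2.
Proof.
  intros Hd Hr R. pose proof (Tq_ge_rho d r q Hd Hr R) as HT. destruct R as (Hq & _).
  rewrite one_sub_rgq_eq by auto. pose proof (rho_ge r). pose proof (rho_ge1 r).
  assert (0 < r * q) by nra.
  assert (HL : (d * rho r)^2 <= (Tq r q + r * q)^2) by (apply pow_incr; nra).
  assert (0 < d^2) by (apply pow_lt; lra).
  split; [apply Rdiv_le_0_compat; [nra|apply pow_lt; nra]|].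
  rewrite Rmult_comm, Rmult_div_assoc, Rle_div_l by (apply pow_lt; nra).
  assert (1 + r^2 <= 2 * rho r ^ 2) by nra.
  apply Rle_trans with (2 * rho r ^ 2 * (8 * (1 - q^2))); [apply Rmult_le_compat_r; nra|].
  apply Rle_trans with (16 / d^2 * (d * rho r)^2); [|apply Rmult_le_compat_l; [|exact HL]].
  - replace (16 / d ^ 2 * (d * rho r) ^ 2) with (16 * rho r ^ 2) by (field; lra). nra.
  - apply Rlt_le, Rdiv_lt_0_compat; lra.
Qed.

Definition bounded_lip (D x1 x2 M L : R) :=
  Rabs x1 <= M /\ Rabs x2 <= M /\ Rabs (x1 - x2) <= L * D.

Lemma bounded_lip_const D c : 0 <= D -> bounded_lip D c c (Rabs c) 0.
Proof. intros. repeat split; try lra. rewrite Rminus_diag, Rabs_R0. lra. Qed.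

Lemma bounded_lip_add D x1 x2 y1 y2 M1 M2 L1 L2 :
  bounded_lip D x1 x2 M1 L1 -> bounded_lip D y1 y2 M2 L2 ->
  bounded_lip D (x1 + y1) (x2 + y2) (M1 + M2) (L1 + L2).
Proof.
  intros (A1 & A2 & A3) (B1 & B2 & B3). unfold bounded_lip.
  replace (x1 + y1 - (x2 + y2)) with ((x1 - x2) + (y1 - y2)) by ring.
  repeat split; (eapply Rle_trans; [apply Rabs_triang|rewrite ?Rmult_plus_distr_r; lra]).
Qed.

Lemma bounded_lip_opp D x1 x2 M L :
  bounded_lip D x1 x2 M L -> bounded_lip D (- x1) (- x2) M L.
Proof.
  intros (A1 & A2 & A3). unfold bounded_lip.
  replace (- x1 - - x2) with (- (x1 - x2)) by ring. now rewrite !Rabs_Ropp.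
Qed.

Lemma bounded_lip_mul D x1 x2 y1 y2 M1 M2 L1 L2 :
  bounded_lip D x1 x2 M1 L1 -> bounded_lip D y1 y2 M2 L2 ->
  bounded_lip D (x1 * y1) (x2 * y2) (M1 * M2) (M1 * L2 + M2 * L1).
Proof.
  intros (A1 & A2 & A3) (B1 & B2 & B3). unfold bounded_lip.
  pose proof (Rabs_pos x1). pose proof (Rabs_pos y2).
  pose proof (Rabs_pos (x1 - x2)). pose proof (Rabs_pos (y1 - y2)).
  repeat split; rewrite ?Rabs_mult; try (apply Rmult_le_compat; auto using Rabs_pos).
  replace (x1 * y1 - x2 * y2) with (x1 * (y1 - y2) + y2 * (x1 - x2)) by ring.
  eapply Rle_trans; [apply Rabs_triang|]. rewrite !Rabs_mult.
  assert (Rabs x1 * Rabs (y1 - y2) <= M1 * (L2 * D)) by (apply Rmult_le_compat; lra).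
  assert (Rabs y2 * Rabs (x1 - x2) <= M2 * (L1 * D)) by (apply Rmult_le_compat; lra).
  lra.
Qed.

Lemma bounded_lip_inv D x1 x2 M L m : 0 < m -> m <= x1 -> m <= x2 ->
  bounded_lip D x1 x2 M L -> bounded_lip D (/ x1) (/ x2) (/ m) (L / (m * m)).
Proof.
  intros Hm H1 H2 (A1 & A2 & A3).
  assert (/ x1 <= / m) by (apply Rinv_le_contravar; lra).
  assert (/ x2 <= / m) by (apply Rinv_le_contravar; lra).
  assert (0 < / x1) by (apply Rinv_0_lt_compat; lra).
  assert (0 < / x2) by (apply Rinv_0_lt_compat; lra).
  unfold bounded_lip. repeat split; try (rewrite Rabs_pos_eq; lra).
  replace (/ x1 - / x2) with ((x2 - x1) / (x1 * x2)) by (field; lra).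
  rewrite Rabs_div, Rabs_pos_eq with (x := x1 * x2), <- Rabs_Ropp, Ropp_minus_distr by nra.
  apply Rle_trans with (Rabs (x1 - x2) / (m * m)).
  - apply Rmult_le_compat_l; [apply Rabs_pos|]. apply Rinv_le_contravar; nra.
  - unfold Rdiv. rewrite (Rmult_comm L), Rmult_assoc, Rmult_comm.
    apply Rmult_le_compat_l; [left; apply Rinv_0_lt_compat; nra|lra].
Qed.

(* [kq] and [hq] times [rho r ^ 3], in the variables t = Tq r q / rho r in [d, 3]
   and p = r q / rho r in [0, 1]. *)
Definition psik t p := 16 * / (t * ((t + p) * (t + p))).
Definition psih t p q := 32 * (q * (1 - q * q)) * / ((t + p) * ((t + p) * (t + p)))
   + 16 * (q * (1 - q * q)) * / (t * ((t + p) * (t + p))).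

Lemma psi_bounded_lip d : 0 < d <= 1 -> exists Mk Lk Mh Lh,
  forall D t1 t2 p1 p2 q1 q2, 0 <= D ->
    bounded_lip D t1 t2 3 (5 / d) -> d <= t1 -> d <= t2 ->
    bounded_lip D p1 p2 1 1 -> 0 <= p1 -> 0 <= p2 -> bounded_lip D q1 q2 1 1 ->
    bounded_lip D (psik t1 p1) (psik t2 p2) Mk Lk /\
    bounded_lip D (psih t1 p1 q1) (psih t2 p2 q2) Mh Lh.
Proof.
  (* The four constants are left to be found by unification with the rules above. *)
  intros Hd. do 4 eexists. intros D t1 t2 p1 p2 q1 q2 HD Ht H1 H2 Hp Hp1 Hp2 Hq.
  assert (Hm : 0 < d * (d * d)) by (repeat apply Rmult_lt_0_compat; lra).
  assert (Htp := bounded_lip_add _ _ _ _ _ _ _ _ _ Ht Hp).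
  assert (Hsq := bounded_lip_mul _ _ _ _ _ _ _ _ _ Htp Htp).
  assert (Hq3 := bounded_lip_mul _ _ _ _ _ _ _ _ _ Hq
    (bounded_lip_add _ _ _ _ _ _ _ _ _ (bounded_lip_const D 1 HD)
      (bounded_lip_opp _ _ _ _ _ (bounded_lip_mul _ _ _ _ _ _ _ _ _ Hq Hq)))).
  assert (Hcube : forall a b, d <= a -> d <= b -> d * (d * d) <= a * (b * b)).
  { intros a b Ha Hb. apply Rmult_le_compat; try lra; [nra|]. apply Rmult_le_compat; lra. }
  assert (Hinv1 := bounded_lip_inv _ _ _ _ _ _ Hm (Hcube t1 (t1 + p1) H1 ltac:(lra))
    (Hcube t2 (t2 + p2) H2 ltac:(lra)) (bounded_lip_mul _ _ _ _ _ _ _ _ _ Ht Hsq)).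
  assert (Hinv2 := bounded_lip_inv _ _ _ _ _ _ Hm (Hcube (t1 + p1) (t1 + p1) ltac:(lra) ltac:(lra))
    (Hcube (t2 + p2) (t2 + p2) ltac:(lra) ltac:(lra)) (bounded_lip_mul _ _ _ _ _ _ _ _ _ Htp Hsq)).
  split.
  - apply bounded_lip_mul; [apply bounded_lip_const; auto|exact Hinv1].
  - apply bounded_lip_add; apply bounded_lip_mul; try exact Hinv1; try exact Hinv2;
      (apply bounded_lip_mul; [apply bounded_lip_const; auto|exact Hq3]).
Qed.

Lemma Tq_rho_bounded_lip d r q1 q2 : 0 < d <= 1 -> 0 < r ->
  admissible d r q1 -> admissible d r q2 ->
  bounded_lip (Rabs (q1 - q2)) (Tq r q1 / rho r) (Tq r q2 / rho r) 3 (5 / d).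
Proof.
  intros Hd Hr R1 R2. pose proof (rho_pos r) as Hp.
  pose proof (Tq_lipschitz d r q1 q2 Hd Hr R1 R2).
  pose proof (Tq_le_rho r q1 Hr (proj1 R1)). pose proof (Tq_le_rho r q2 Hr (proj1 R2)).
  pose proof (Tq_pos r q1 Hr (proj1 R1)). pose proof (Tq_pos r q2 Hr (proj1 R2)).
  unfold bounded_lip. rewrite <- RIneq.Rdiv_minus_distr, !Rabs_div, (Rabs_pos_eq (rho r)) by lra.
  rewrite !Rle_div_l by lra. rewrite !Rabs_pos_eq by lra. repeat split; nra.
Qed.

Lemma rq_rho_bounded_lip r q1 q2 : 0 < r -> 0 < q1 <= 1 -> 0 < q2 <= 1 ->
  bounded_lip (Rabs (q1 - q2)) (r * q1 / rho r) (r * q2 / rho r) 1 1.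
Proof.
  intros Hr Hq1 Hq2. pose proof (rho_pos r). pose proof (rho_ge r).
  unfold bounded_lip. rewrite <- RIneq.Rdiv_minus_distr, !Rabs_div, (Rabs_pos_eq (rho r)) by lra.
  rewrite !Rle_div_l by lra.
  replace (r * q1 - r * q2) with (r * (q1 - q2)) by ring.
  rewrite (Rabs_pos_eq (r * q1)), (Rabs_pos_eq (r * q2)), Rabs_mult, (Rabs_pos_eq r) by nra.
  pose proof (Rabs_pos (q1 - q2)). repeat split; nra.
Qed.

Definition kh_decay d Mk Lk Mh Lh := forall r q1 q2, 0 < r ->
  admissible d r q1 -> admissible d r q2 ->
  Rabs (kq r q1) * rho r ^ 3 <= Mk /\ Rabs (kq r q2) * rho r ^ 3 <= Mk /\
  Rabs (kq r q1 - kq r q2) * rho r ^ 3 <= Lk * Rabs (q1 - q2) /\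
  Rabs (hq r q1) * rho r ^ 3 <= Mh /\ Rabs (hq r q2) * rho r ^ 3 <= Mh /\
  Rabs (hq r q1 - hq r q2) * rho r ^ 3 <= Lh * Rabs (q1 - q2).

Lemma kh_decay_exists d : 0 < d <= 1 -> exists Mk Lk Mh Lh,
  0 <= Mk /\ 0 <= Lk /\ 0 <= Mh /\ 0 <= Lh /\ kh_decay d Mk Lk Mh Lh.
Proof.
  intros Hd. destruct (psi_bounded_lip d Hd) as (Mk & Lk & Mh & Lh & HB).
  exists (Rabs Mk), (Rabs Lk), (Rabs Mh), (Rabs Lh).
  do 4 (split; [apply Rabs_pos|]). intros r q1 q2 Hr R1 R2.
  pose proof (rho_pos r) as Hp. assert (Hp3 : 0 < rho r ^ 3) by (apply pow_lt; lra).
  pose proof (Rabs_pos (q1 - q2)) as HD.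
  pose proof (proj1 R1) as Hq1. pose proof (proj1 R2) as Hq2.
  assert (Hnorm : forall q, 0 < q <= 1 ->
    kq r q = psik (Tq r q / rho r) (r * q / rho r) / rho r ^ 3 /\
    hq r q = psih (Tq r q / rho r) (r * q / rho r) q / rho r ^ 3).
  { intros q Hq. pose proof (Tq_pos r q Hr Hq). assert (0 < r * q) by nra.
    unfold kq, hq, psik, psih. split; field; repeat split; lra. }
  assert (Hscaled : forall x, Rabs (x / rho r ^ 3) * rho r ^ 3 = Rabs x).
  { intros x. rewrite Rabs_div, (Rabs_pos_eq (rho r ^ 3)) by lra. field. lra. }
  destruct (Hnorm q1 Hq1) as [-> ->], (Hnorm q2 Hq2) as [-> ->].
  rewrite <- !RIneq.Rdiv_minus_distr, !Hscaled.
  assert (Hlow : forall q, admissible d r q -> d <= Tq r q / rho r).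
  { intros q Rq. apply Rle_div_r; [lra|]. now apply Tq_ge_rho. }
  assert (Hnn : forall q, 0 < q <= 1 -> 0 <= r * q / rho r)
    by (intros; apply Rdiv_le_0_compat; nra).
  assert (Hq : bounded_lip (Rabs (q1 - q2)) q1 q2 1 1).
  { unfold bounded_lip. rewrite !Rabs_pos_eq by lra. repeat split; lra. }
  destruct (HB _ _ _ _ _ _ _ HD (Tq_rho_bounded_lip d r q1 q2 Hd Hr R1 R2) (Hlow q1 R1) (Hlow q2 R2)
    (rq_rho_bounded_lip r q1 q2 Hr Hq1 Hq2) (Hnn q1 Hq1) (Hnn q2 Hq2) Hq)
    as [(K1 & K2 & K3) (H1 & H2 & H3)].
  pose proof (Rle_abs Mk). pose proof (Rle_abs Mh).
  pose proof (Rmult_le_compat_r _ _ _ HD (Rle_abs Lk)).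
  pose proof (Rmult_le_compat_r _ _ _ HD (Rle_abs Lh)).
  repeat split; lra.
Qed.

Lemma le_of_derive_nonpos f f' a b : a <= b ->
  (forall c, a <= c <= b -> derivable_pt_lim f c (f' c)) ->
  (forall c, a < c < b -> f' c <= 0) -> f b <= f a.
Proof.
  intros Hab HD Hneg. destruct (Req_dec a b) as [<-|Hne]; [lra|].
  destruct (MVT_cor2 f f' a b ltac:(lra) HD) as (c & Hc & Hcab).
  pose proof (Hneg c Hcab). nra.
Qed.

Lemma exp_monotone a b : a <= b -> exp a <= exp b.
Proof. intros [H|<-]; [now apply Rlt_le, exp_increasing|lra]. Qed.

Lemma Omega_weighted_nonincreasing Q d : classQ Q -> 0 < d <= 1 ->
  (forall r, 1 <= r -> d <= Q r) ->
  forall a b, 1 <= a <= b ->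
  exp (- omega_int Q b) * (b + / d)^2 <= exp (- omega_int Q a) * (a + / d)^2.
Proof.
  intros HQ Hd HR a b Hab.
  assert (Hc : 0 < / d) by (apply Rinv_0_lt_compat; lra).
  apply (le_of_derive_nonpos (fun x => exp (- omega_int Q x) * (x + / d)^2)
    (fun x => exp (- omega_int Q x) * (2 * (x + / d) - omega_integrand Q x * (x + / d)^2)));
    [lra| |].
  - intros x _. apply is_derive_Reals.
    assert (HGd := omega_int_derive Q HQ x). auto_derive; [now exists (omega_integrand Q x)|].
    replace (Derive (fun x => omega_int Q x) x) with (omega_integrand Q x)
      by (symmetry; now apply is_derive_unique). ring.
  - intros x Hx. pose proof (exp_pos (- omega_int Q x)).
    pose proof (classQ_bounds Q HQ x ltac:(lra)).
    rewrite omega_integrand_eq by (auto; lra).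
    pose proof (gq_ge d x (Q x) Hd ltac:(lra) ltac:(split; [apply HR|]; lra)).
    assert (2 * (x + / d) - gq x (Q x) * (x + / d) ^ 2 <= 0) by nra. nra.
Qed.

Lemma Omega_decay Q d : classQ Q -> 0 < d <= 1 -> (forall r, 0 < r -> admissible d r (Q r)) ->
  forall r, 0 < r -> exp (- omega_int Q r) * (1 + r^2) <= (1 + / d)^2.
Proof.
  intros HQ Hd HR r Hr.
  assert (Hc : 1 <= / d) by (rewrite <- Rinv_1; apply Rinv_le_contravar; lra).
  assert (HE : forall x, 0 <= x -> exp (- omega_int Q x) <= 1).
  { intros x Hx. rewrite <- exp_0. apply exp_monotone.
    pose proof (omega_int_nonneg Q HQ x Hx). lra. }
  pose proof (exp_pos (- omega_int Q r)).
  destruct (Rle_dec r 1) as [Hr1|Hr1].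
  - pose proof (HE r ltac:(lra)). apply Rle_trans with (1 * 2); nra.
  - assert (HR1 : forall x, 1 <= x -> d <= Q x) by (intros x Hx; apply (HR x); lra).
    pose proof (Omega_weighted_nonincreasing Q d HQ Hd HR1 1 r ltac:(lra)).
    pose proof (HE 1 ltac:(lra)). pose proof (exp_pos (- omega_int Q 1)).
    assert (1 + r^2 <= (r + / d)^2) by nra.
    apply Rle_trans with (exp (- omega_int Q r) * (r + / d) ^ 2); [nra|].
    apply Rle_trans with (exp (- omega_int Q 1) * (1 + / d) ^ 2); [lra|].
    pose proof (pow2_ge_0 (1 + / d)). nra.
Qed.

Lemma abs_diff_le_atan f f' K r : 0 <= r ->
  (forall x, derivable_pt_lim f x (f' x)) ->
  (forall x, 0 < x < r -> Rabs (f' x) <= K / (1 + x^2)) ->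
  Rabs (f r - f 0) <= K * atan r.
Proof.
  intros Hr HD Hb.
  assert (Hside : forall s, Rabs s = 1 -> s * (f r - f 0) <= K * atan r).
  { intros s Hs.
    assert (Hle := le_of_derive_nonpos (fun x => s * f x - K * atan x)
      (fun x => s * f' x - K * / (1 + x^2)) 0 r Hr).
    cbn beta in Hle. rewrite atan_0 in Hle.
    enough (s * f r - K * atan r <= s * f 0 - K * 0) by lra. apply Hle.
    - intros c _. apply derivable_pt_lim_minus.
      + apply derivable_pt_lim_scal, HD.
      + apply derivable_pt_lim_scal, derivable_pt_lim_atan.
    - intros c Hc. specialize (Hb c Hc). unfold Rdiv in Hb.
      pose proof (Rle_abs (s * f' c)). rewrite Rabs_mult, Hs in H. lra. }
  assert (Hm1 : Rabs (-1) = 1) by (rewrite Rabs_left; lra).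
  apply Rabs_le. pose proof (Hside 1 Rabs_R1). pose proof (Hside (-1) Hm1). lra.
Qed.

Lemma exp_opp_lipschitz a b :
  Rabs (exp (- a) - exp (- b)) <= Rmax (exp (- a)) (exp (- b)) * Rabs (a - b).
Proof.
  assert (K : forall a b, a <= b -> Rabs (exp (- a) - exp (- b)) <= exp (- a) * (b - a)).
  { intros x y Hxy. replace (exp (- y)) with (exp (- x) * exp (- (y - x)))
      by (rewrite <- exp_plus; f_equal; ring).
    pose proof (exp_ineq1_le (- (y - x))). pose proof (exp_pos (- x)).
    assert (exp (- (y - x)) <= 1) by (rewrite <- exp_0; apply exp_monotone; lra).
    rewrite Rabs_pos_eq by nra. nra. }
  destruct (Rle_dec a b).
  - rewrite (Rabs_minus_sym a b), (Rabs_pos_eq (b - a)) by lra.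
    eapply Rle_trans; [now apply K|]. apply Rmult_le_compat_r; [lra|apply Rmax_l].
  - rewrite (Rabs_pos_eq (a - b)) by lra. rewrite Rabs_minus_sym.
    eapply Rle_trans; [apply K; lra|]. apply Rmult_le_compat_r; [lra|apply Rmax_r].
Qed.

Lemma one_add_sq_le_rho r : 0 <= r -> 1 + r^2 <= 2 * rho r ^ 3.
Proof.
  intros Hr. pose proof (rho_ge1 r). pose proof (rho_ge r).
  assert (r^2 <= rho r ^ 2) by (apply pow_incr; lra).
  assert (rho r ^ 2 <= rho r ^ 3) by (simpl; nra). nra.
Qed.

Lemma mul_one_add_sq_le r : 0 < r -> r * (1 + r^2) <= 2 * rho r ^ 3.
Proof.
  intros Hr. unfold rho. destruct (Rle_dec r 1).
  - rewrite Rmax_left by lra. nra.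
  - rewrite Rmax_right by lra. nra.
Qed.

Lemma one_add_pow5_le r : 0 < r -> 1 + r^5 <= 2 * ((1 + r^2) * rho r ^ 3).
Proof.
  intros Hr. unfold rho. destruct (Rle_dec r 1).
  - rewrite Rmax_left by lra. assert (r^5 <= 1) by (rewrite <- (pow1 5); apply pow_incr; lra).
    assert (0 <= r^2) by nra. nra.
  - rewrite Rmax_right by lra. assert (1 <= r^3) by (rewrite <- (pow1 3); apply pow_incr; lra).
    replace (r^5) with (r^2 * r^3) by ring. nra.
Qed.

Lemma Rabs_mult_sub_le a1 a2 b1 b2 :
  Rabs (a1 * b1 - a2 * b2) <= Rabs (a1 - a2) * Rabs b1 + Rabs a2 * Rabs (b1 - b2).
Proof.
  replace (a1 * b1 - a2 * b2) with ((a1 - a2) * b1 + a2 * (b1 - b2)) by ring.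
  rewrite <- !Rabs_mult. apply Rabs_triang.
Qed.

Lemma Rabs_mult_sub_weighted a1 a2 b1 b2 w u v : 0 <= w <= u * v -> 0 <= u -> 0 <= v ->
  w * Rabs (a1 * b1 - a2 * b2)
  <= (Rabs (a1 - a2) * u) * (Rabs b1 * v) + (Rabs a2 * u) * (Rabs (b1 - b2) * v).
Proof.
  intros Hw Hu Hv. pose proof (Rabs_mult_sub_le a1 a2 b1 b2).
  pose proof (Rabs_pos (a1 - a2)). pose proof (Rabs_pos b1).
  pose proof (Rabs_pos a2). pose proof (Rabs_pos (b1 - b2)).
  apply Rle_trans with ((u * v) * (Rabs (a1 - a2) * Rabs b1 + Rabs a2 * Rabs (b1 - b2))).
  - apply Rmult_le_compat; try lra. apply Rabs_pos.
  - apply Req_le. ring.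
Qed.

Lemma kh_combination_decay d Mk Lk Mh Lh r q1 q2 p1 p2 N12 N2 :
  kh_decay d Mk Lk Mh Lh -> 0 < r -> admissible d r q1 -> admissible d r q2 ->
  0 <= p2 <= N2 -> Rabs (p1 - p2) <= N12 ->
  Rabs (hq r q2 + p2 * kq r q2) * rho r ^ 3 <= Mh + N2 * Mk /\
  Rabs ((hq r q1 + p1 * kq r q1) - (hq r q2 + p2 * kq r q2)) * rho r ^ 3
    <= Lh * Rabs (q1 - q2) + N12 * Mk + N2 * (Lk * Rabs (q1 - q2)).
Proof.
  intros HB Hr R1 R2 Hp2 Hp12.
  destruct (HB r q1 q2 Hr R1 R2) as (K1 & K2 & K3 & H1 & H2 & H3).
  pose proof (rho_pos r). assert (0 < rho r ^ 3) by (apply pow_lt; lra).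
  pose proof (Rabs_pos (kq r q1)). pose proof (Rabs_pos (kq r q2 )).
  pose proof (Rabs_pos (kq r q1 - kq r q2)). pose proof (Rabs_pos (p1 - p2)).
  split.
  - apply Rle_trans with ((Rabs (hq r q2) + p2 * Rabs (kq r q2)) * rho r ^ 3).
    + apply Rmult_le_compat_r; [lra|]. eapply Rle_trans; [apply Rabs_triang|].
      rewrite Rabs_mult, (Rabs_pos_eq p2) by lra. lra.
    + assert (p2 * (Rabs (kq r q2) * rho r ^ 3) <= N2 * Mk)
        by (apply Rmult_le_compat; nra).
      nra.
  - replace ((hq r q1 + p1 * kq r q1) - (hq r q2 + p2 * kq r q2))
      with ((hq r q1 - hq r q2) + (p1 * kq r q1 - p2 * kq r q2)) by ring.
    pose proof (Rabs_mult_sub_le p1 p2 (kq r q1) (kq r q2)) as Hpk.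
    rewrite (Rabs_pos_eq p2) in Hpk by lra.
    apply Rle_trans with ((Rabs (hq r q1 - hq r q2)
      + (Rabs (p1 - p2) * Rabs (kq r q1) + p2 * Rabs (kq r q1 - kq r q2))) * rho r ^ 3).
    + apply Rmult_le_compat_r; [lra|]. eapply Rle_trans; [apply Rabs_triang|]. lra.
    + assert (Rabs (p1 - p2) * (Rabs (kq r q1) * rho r ^ 3) <= N12 * Mk)
        by (apply Rmult_le_compat; nra).
      assert (p2 * (Rabs (kq r q1 - kq r q2) * rho r ^ 3) <= N2 * (Lk * Rabs (q1 - q2)))
        by (apply Rmult_le_compat; nra).
      nra.
Qed.

Lemma abs_bound_nonneg (Q1 Q2 : R -> R) Linf :
  (forall r, 0 < r -> Rabs (Q1 r - Q2 r) <= Linf) -> 0 <= Linf.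
Proof. intros HL. eapply Rle_trans; [apply Rabs_pos|apply (HL 1); lra]. Qed.

Lemma scaled_deriv_bounds (Q1 Q2 : R -> R) r a1 a2 N12 N2 : 0 < r ->
  derivable_pt_lim Q1 r a1 -> derivable_pt_lim Q2 r a2 -> 0 < a2 ->
  r * Rabs (deriv (fun x => Q1 x - Q2 x) r) <= N12 -> r * Rabs (deriv Q2 r) <= N2 ->
  0 <= r * a2 <= N2 /\ Rabs (r * a1 - r * a2) <= N12.
Proof.
  intros Hr H1 H2 Ha2 HN12 HN2.
  rewrite (deriv_eq (fun x => Q1 x - Q2 x) r (a1 - a2)) in HN12
    by (apply derivable_pt_lim_minus; auto).
  rewrite (deriv_eq _ _ _ H2), Rabs_pos_eq in HN2 by lra.
  replace (r * a1 - r * a2) with (r * (a1 - a2)) by ring.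
  rewrite Rabs_mult, (Rabs_pos_eq r) by lra. split; [split|]; nra.
Qed.

Section Stability.

Variables (d : R) (Q1 Q2 : R -> R) (Linf : R).
Hypothesis Hd : 0 < d <= 1.
Hypotheses (HQ1 : classQ Q1) (HQ2 : classQ Q2).
Hypotheses (R1 : forall r, 0 < r -> admissible d r (Q1 r))
           (R2 : forall r, 0 < r -> admissible d r (Q2 r)).
Hypothesis HL : forall r, 0 < r -> Rabs (Q1 r - Q2 r) <= Linf.

Lemma omega_integrand_lipschitz s : 0 < s ->
  Rabs (omega_integrand Q1 s - omega_integrand Q2 s) <= 32 / d^3 * Linf / (1 + s^2).
Proof.
  intros Hs. rewrite !omega_integrand_eq by (auto; apply classQ_bounds; auto).
  pose proof (gq_lipschitz d s (Q1 s) (Q2 s) Hd Hs (R1 s Hs) (R2 s Hs)).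
  pose proof (one_add_sq_le_rho s ltac:(lra)). pose proof (rho_ge1 s).
  assert (Hd3 : 0 < 16 / d^3) by (apply Rdiv_lt_0_compat; [lra|apply pow_lt; lra]).
  pose proof (Rmult_le_compat_l _ _ _ (Rlt_le _ _ Hd3) (HL s Hs)).
  pose proof (Rabs_pos (gq s (Q1 s) - gq s (Q2 s))).
  apply Rle_div_r; [nra|].
  apply Rle_trans with (Rabs (gq s (Q1 s) - gq s (Q2 s)) * (2 * rho s ^ 3)); [nra|].
  replace (32 / d ^ 3 * Linf) with (2 * (16 / d ^ 3 * Linf)) by (field; lra). nra.
Qed.

Lemma omega_int_lipschitz r : 0 <= r -> Rabs (omega_int Q1 r - omega_int Q2 r) <= 64 / d^3 * Linf.
Proof.
  intros Hr.
  assert (HK : 0 <= 32 / d^3 * Linf).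
  { apply Rmult_le_pos; [apply Rlt_le, Rdiv_lt_0_compat; [lra|apply pow_lt; lra]|].
    exact (abs_bound_nonneg Q1 Q2 Linf HL). }
  assert (Hdiff := abs_diff_le_atan (fun x => omega_int Q1 x - omega_int Q2 x)
    (fun x => omega_integrand Q1 x - omega_integrand Q2 x) (32 / d^3 * Linf) r Hr).
  cbn beta in Hdiff. rewrite !omega_int_0, Rminus_0_r, Rminus_0_r in Hdiff.
  assert (Hat : atan r <= 2) by (pose proof (atan_bound r); pose proof PI_4; lra).
  eapply Rle_trans; [apply Hdiff|].
  - intros x. apply derivable_pt_lim_minus; apply is_derive_Reals, omega_int_derive; auto.
  - intros x Hx. apply omega_integrand_lipschitz; lra.
  - replace (64 / d ^ 3 * Linf) with (32 / d ^ 3 * Linf * 2) by (field; lra).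
    apply Rmult_le_compat_l; auto.
Qed.

Lemma Omega_diff_decay r : 0 < r ->
  Rabs (exp (- omega_int Q1 r) - exp (- omega_int Q2 r)) * (1 + r^2)
  <= (1 + / d)^2 * (64 / d^3 * Linf).
Proof.
  intros Hr. pose proof (exp_opp_lipschitz (omega_int Q1 r) (omega_int Q2 r)).
  pose proof (omega_int_lipschitz r ltac:(lra)).
  assert (HM : Rmax (exp (- omega_int Q1 r)) (exp (- omega_int Q2 r)) * (1 + r^2) <= (1 + / d)^2).
  { unfold Rmax. destruct (Rle_dec _ _); [apply (Omega_decay Q2)|apply (Omega_decay Q1)]; auto. }
  assert (0 <= Rmax (exp (- omega_int Q1 r)) (exp (- omega_int Q2 r))).
  { eapply Rle_trans; [|apply Rmax_l]. left; apply exp_pos. }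
  pose proof (Rabs_pos (omega_int Q1 r - omega_int Q2 r)).
  apply Rle_trans with (Rmax (exp (- omega_int Q1 r)) (exp (- omega_int Q2 r)) * (1 + r^2)
                        * Rabs (omega_int Q1 r - omega_int Q2 r)); [nra|].
  apply Rmult_le_compat; nra.
Qed.

Lemma Wf_diff_decay r : 0 < r ->
  (1 + r^4) * Rabs (Wf Q1 r - Wf Q2 r) <= (1 + / d)^2 * (1024 / d^5 + 32 / d^3) * Linf.
Proof.
  intros Hr. rewrite !Wf_eq, !(Rmult_comm (exp _)) by auto.
  eapply Rle_trans; [apply (Rabs_mult_sub_weighted _ _ _ _ _ (1 + r^2) (1 + r^2)); nra|].
  replace (2 - r * gq r (Q1 r) - (2 - r * gq r (Q2 r)))
    with (- (r * (gq r (Q1 r) - gq r (Q2 r)))) by ring.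
  destruct (one_sub_rgq_decay d r (Q2 r) Hd Hr (R2 r Hr)) as [HB0 HB].
  rewrite Rabs_Ropp, Rabs_mult, (Rabs_pos_eq r), (Rabs_pos_eq (exp _)),
    (Rabs_pos_eq (2 - _)) by (auto using Rlt_le, exp_pos; lra).
  pose proof (Omega_diff_decay r Hr) as HO. pose proof (Omega_decay Q1 d HQ1 Hd R1 r Hr) as HO1.
  pose proof (gq_lipschitz d r (Q1 r) (Q2 r) Hd Hr (R1 r Hr) (R2 r Hr)) as Hg.
  pose proof (mul_one_add_sq_le r Hr). pose proof (abs_bound_nonneg Q1 Q2 Linf HL).
  pose proof (HL r Hr).
  pose proof (exp_pos (- omega_int Q1 r)). assert (0 < rho r ^ 3) by (apply pow_lt, rho_pos).
  pose proof (Rabs_pos (exp (- omega_int Q1 r) - exp (- omega_int Q2 r))).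
  pose proof (Rabs_pos (gq r (Q1 r) - gq r (Q2 r))). pose proof (Rabs_pos (Q1 r - Q2 r)).
  assert (Hd3 : 0 < 16 / d^3) by (apply Rdiv_lt_0_compat; [lra|apply pow_lt; lra]).
  assert (Hg' : r * Rabs (gq r (Q1 r) - gq r (Q2 r)) * (1 + r^2) <= 2 * (16 / d^3 * Linf)).
  { apply Rle_trans with (2 * (Rabs (gq r (Q1 r) - gq r (Q2 r)) * rho r ^ 3)); [nra|].
    apply Rmult_le_compat_l; [lra|]. eapply Rle_trans; [exact Hg|]. nra. }
  assert (T1 : r * Rabs (gq r (Q1 r) - gq r (Q2 r)) * (1 + r^2)
               * (exp (- omega_int Q1 r) * (1 + r^2))
               <= 2 * (16 / d^3 * Linf) * (1 + / d)^2)
    by (apply Rmult_le_compat; auto; apply Rmult_le_pos; nra).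
  assert (T2 : (2 - r * gq r (Q2 r)) * (1 + r^2)
               * (Rabs (exp (- omega_int Q1 r) - exp (- omega_int Q2 r)) * (1 + r^2))
               <= 16 / d^2 * ((1 + / d)^2 * (64 / d^3 * Linf)))
    by (apply Rmult_le_compat; auto; apply Rmult_le_pos; nra).
  replace ((1 + / d) ^ 2 * (1024 / d ^ 5 + 32 / d ^ 3) * Linf)
    with (2 * (16 / d^3 * Linf) * (1 + / d)^2 + 16 / d^2 * ((1 + / d)^2 * (64 / d^3 * Linf)))
    by (field; lra).
  lra.
Qed.

Lemma Wf_deriv_diff_decay Mk Lk Mh Lh N12 N2 :
  0 <= Mk -> 0 <= Lk -> 0 <= Mh -> 0 <= Lh -> kh_decay d Mk Lk Mh Lh ->
  (forall r, 0 < r -> r * Rabs (deriv (fun x => Q1 x - Q2 x) r) <= N12) ->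
  (forall r, 0 < r -> r * Rabs (deriv Q2 r) <= N2) ->
  forall r, 0 < r -> (1 + r^5) * Rabs (deriv (Wf Q1) r - deriv (Wf Q2) r)
    <= 2 * (1 + / d)^2 * (Mk * N12 + (64 / d^3 * (Mh + Mk) + Lh + Lk) * (1 + N2) * Linf).
Proof.
  intros HMk HLk HMh HLh HB HN12 HN2 r Hr.
  pose proof HQ1 as (Q1' & HD1 & _). pose proof HQ2 as (Q2' & HD2 & _ & _ & HQ2' & _).
  rewrite (deriv_eq _ _ _ (Wf_derive Q1 Q1' HQ1 HD1 r Hr)),
    (deriv_eq _ _ _ (Wf_derive Q2 Q2' HQ2 HD2 r Hr)).
  destruct (scaled_deriv_bounds Q1 Q2 r (Q1' r) (Q2' r) N12 N2 Hr (HD1 r Hr) (HD2 r Hr)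
    (HQ2' r Hr) (HN12 r Hr) (HN2 r Hr)) as [Hp2 Hp12].
  destruct (kh_combination_decay d Mk Lk Mh Lh r (Q1 r) (Q2 r) (r * Q1' r) (r * Q2' r) N12 N2
    HB Hr (R1 r Hr) (R2 r Hr) Hp2 Hp12) as [HY2 HDY].
  set (Y1 := hq r (Q1 r) + r * Q1' r * kq r (Q1 r)) in *.
  set (Y2 := hq r (Q2 r) + r * Q2' r * kq r (Q2 r)) in *.
  replace (- exp (- omega_int Q1 r) * Y1 - - exp (- omega_int Q2 r) * Y2)
    with (- (Y1 * exp (- omega_int Q1 r) - Y2 * exp (- omega_int Q2 r))) by ring.
  rewrite Rabs_Ropp.
  pose proof (one_add_pow5_le r Hr). pose proof (pow_le r 5 ltac:(lra)).
  eapply Rle_trans; [apply (Rabs_mult_sub_weighted _ _ _ _ _ (2 * rho r ^ 3) (1 + r^2)); nra|].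
  rewrite (Rabs_pos_eq (exp _)) by (left; apply exp_pos).
  pose proof (Omega_diff_decay r Hr). pose proof (Omega_decay Q1 d HQ1 Hd R1 r Hr).
  pose proof (abs_bound_nonneg Q1 Q2 Linf HL). pose proof (HL r Hr).
  assert (0 < rho r ^ 3) by (apply pow_lt, rho_pos).
  pose proof (exp_pos (- omega_int Q1 r)). pose proof (Rabs_pos (Q1 r - Q2 r)).
  pose proof (Rabs_pos (exp (- omega_int Q1 r) - exp (- omega_int Q2 r))).
  pose proof (Rabs_pos (Y1 - Y2)). pose proof (Rabs_pos Y2).
  assert (0 <= N12) by (eapply Rle_trans; [apply Rabs_pos|exact Hp12]).
  assert (0 <= N2) by lra.
  assert (HDY' : Rabs (Y1 - Y2) * rho r ^ 3 <= Lh * Linf + N12 * Mk + N2 * (Lk * Linf)).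
  { eapply Rle_trans; [exact HDY|].
    apply Rplus_le_compat; [apply Rplus_le_compat_r|apply Rmult_le_compat_l; auto];
      apply Rmult_le_compat_l; auto. }
  assert (T1 : Rabs (Y1 - Y2) * (2 * rho r ^ 3) * (exp (- omega_int Q1 r) * (1 + r^2))
               <= 2 * (Lh * Linf + N12 * Mk + N2 * (Lk * Linf)) * (1 + / d)^2)
    by (apply Rmult_le_compat; auto; nra).
  assert (T2 : Rabs Y2 * (2 * rho r ^ 3)
               * (Rabs (exp (- omega_int Q1 r) - exp (- omega_int Q2 r)) * (1 + r^2))
               <= 2 * (Mh + N2 * Mk) * ((1 + / d)^2 * (64 / d^3 * Linf)))
    by (apply Rmult_le_compat; auto; nra).
  assert (0 <= 64 / d^3) by (apply Rlt_le, Rdiv_lt_0_compat; [lra|apply pow_lt; lra]).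
  assert (0 <= (1 + / d)^2) by apply pow2_ge_0.
  set (A := 64 / d^3) in *. set (K := (1 + / d)^2) in *. clearbody A K.
  assert (0 <= K * Linf * (A * Mh * N2 + A * Mk + Lh * N2 + Lk)) by
    (repeat (apply Rmult_le_pos || apply Rplus_le_le_0_compat); lra).
  nra.
Qed.

End Stability.

Lemma Wf_stability d : 0 < d <= 1 -> exists C, 0 < C /\
  forall (Q1 Q2 : R -> R) (Linf N12 N2 : R), classQ Q1 -> classQ Q2 ->
  (forall r, 0 < r -> admissible d r (Q1 r)) -> (forall r, 0 < r -> admissible d r (Q2 r)) ->
  (forall r, 0 < r -> Rabs (Q1 r - Q2 r) <= Linf) ->
  (forall r, 0 < r -> r * Rabs (deriv (fun x => Q1 x - Q2 x) r) <= N12) ->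
  (forall r, 0 < r -> r * Rabs (deriv Q2 r) <= N2) ->
  forall r, 0 < r ->
    (1 + r ^ 4) * Rabs (Wf Q1 r - Wf Q2 r) <= C * Linf /\
    (1 + r ^ 5) * Rabs (deriv (Wf Q1) r - deriv (Wf Q2) r) <= C * N12 + C * (1 + N2) * Linf.
Proof.
  intros Hd.
  destruct (kh_decay_exists d Hd) as (Mk & Lk & Mh & Lh & HMk & HLk & HMh & HLh & HB).
  assert (HA : forall c n, 0 < c -> 0 <= c / d ^ n)
    by (intros; apply Rlt_le, Rdiv_lt_0_compat; [|apply pow_lt]; lra).
  set (K := (1 + / d)^2). set (S := 64 / d^3 * (Mh + Mk) + Lh + Lk).
  set (CW := K * (1024 / d^5 + 32 / d^3)).
  assert (HK : 0 <= K) by apply pow2_ge_0.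
  assert (HS : 0 <= S).
  { assert (0 <= 64 / d^3 * (Mh + Mk)) by (apply Rmult_le_pos; [apply HA|]; lra).
    unfold S. lra. }
  assert (HCW : 0 <= CW) by (apply Rmult_le_pos; [|apply Rplus_le_le_0_compat; apply HA]; lra).
  assert (0 <= 2 * K * Mk) by (apply Rmult_le_pos; lra).
  assert (0 <= 2 * K * S) by (apply Rmult_le_pos; lra).
  set (C := CW + 2 * K * (Mk + S) + 1).
  assert (HC : 0 < C /\ CW <= C /\ 2 * K * Mk <= C /\ 2 * K * S <= C) by (unfold C; lra).
  exists C. split; [lra|].
  intros Q1 Q2 Linf N12 N2 HQ1 HQ2 R1 R2 HL HN12 HN2 r Hr.
  pose proof (abs_bound_nonneg Q1 Q2 Linf HL).
  assert (0 <= N2) by (eapply Rle_trans; [|exact (HN2 r Hr)];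
    apply Rmult_le_pos; [lra|apply Rabs_pos]).
  assert (0 <= N12) by (eapply Rle_trans; [|exact (HN12 r Hr)];
    apply Rmult_le_pos; [lra|apply Rabs_pos]).
  split.
  - eapply Rle_trans; [exact (Wf_diff_decay d Q1 Q2 Linf Hd HQ1 HQ2 R1 R2 HL r Hr)|].
    fold K CW. apply Rmult_le_compat_r; lra.
  - eapply Rle_trans; [exact (Wf_deriv_diff_decay d Q1 Q2 Linf Hd HQ1 HQ2 R1 R2 HL
      Mk Lk Mh Lh N12 N2 HMk HLk HMh HLh HB HN12 HN2 r Hr)|].
    fold K S. replace (2 * K * (Mk * N12 + S * (1 + N2) * Linf))
      with (2 * K * Mk * N12 + 2 * K * S * ((1 + N2) * Linf)) by ring.
    rewrite Rmult_assoc with (r1 := C).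
    apply Rplus_le_compat; apply Rmult_le_compat_r; nra.
Qed.

Lemma sup_pos_ub f s : sup_pos f s -> forall r, 0 < r -> f r <= s.
Proof. intros [Hub _] r Hr. apply Hub. now exists r. Qed.

Theorem lemma6p3 :
  forall delta : R, 0 < delta ->
  exists C : R, 0 < C /\
  forall (Q1 Q2 : R -> R) (Linf N12 N2 : R),
    classQ Q1 -> classQ Q2 ->
    delta <= Rmin (Q1 1) (Q2 1) ->
    Rmax (Q1 1) (Q2 1) <= sqrt (1 - delta ^ 2) ->
    sup_pos (fun r => Rabs (Q1 r - Q2 r)) Linf ->
    sup_pos (fun r => r * Rabs (deriv (fun x => Q1 x - Q2 x) r)) N12 ->
    sup_pos (fun r => r * Rabs (deriv Q2 r)) N2 ->
    (forall r, 0 < r ->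
       (1 + r ^ 4) * Rabs (Wf Q1 r - Wf Q2 r) <= C * Linf) /\
    (forall r, 0 < r ->
       (1 + r ^ 5) * Rabs (deriv (Wf Q1) r - deriv (Wf Q2) r)
         <= C * N12 + C * (1 + N2) * Linf).
Proof.
  intros delta Hd.
  destruct (Rle_dec delta 1) as [Hd1|Hd1].
  2: { exists 1. split; [lra|]. intros Q1 Q2 Linf N12 N2 HQ1 _ Hmin.
       pose proof (classQ_bounds Q1 HQ1 1 Rlt_0_1). pose proof (Rmin_l (Q1 1) (Q2 1)). lra. }
  destruct (Wf_stability delta (conj Hd Hd1)) as (C & HC & Hstab).
  exists C. split; [exact HC|].
  intros Q1 Q2 Linf N12 N2 HQ1 HQ2 Hmin Hmax HL HN12 HN2.
  pose proof (Rmin_l (Q1 1) (Q2 1)). pose proof (Rmin_r (Q1 1) (Q2 1)).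
  pose proof (Rmax_l (Q1 1) (Q2 1)). pose proof (Rmax_r (Q1 1) (Q2 1)).
  assert (Hs := Hstab Q1 Q2 Linf N12 N2 HQ1 HQ2
    (classQ_admissible Q1 delta HQ1 Hd ltac:(lra) ltac:(lra))
    (classQ_admissible Q2 delta HQ2 Hd ltac:(lra) ltac:(lra))
    (sup_pos_ub _ _ HL) (sup_pos_ub _ _ HN12) (sup_pos_ub _ _ HN2)).
  split; intros r Hr; apply (Hs r Hr).
Qed.
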